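(* Let $\pi\in\mathcal{S}_n$ be an arbitrary permutation. (a) For every $r\ge0$ and every $(i,j)\in\mathcal{E}_r(\pi)$ we have $i+j\le n+r$. (b) Let $(i,j)\in D(\pi)$ be a diagram square of rank $1$ such that $(i-1,j)\notin D(\pi)$ and $(i,j-1)\notin D(\pi)$. Then $\pi_{i-1}=j-1$. Furthermore, for any $(i,j)\in\mathcal{E}_1(\pi)$ there is no $(i',j')\in\mathcal{E}(\pi)$ with $i'<i$ and $j'<j$.
   Context: Represent $\pi\in\mathcal{S}_n$ by an $n\times n$ array, rows $i=1,\dots,n$ numbered top to bottom and columns $j=1,\dots,n$ left to right, with a dot in square $(i,\pi_i)$. The diagram $D(\pi)$ is the set of squares $(i,j)$ with $\pi_i>j$ and $\pi^{-1}(j)>i$; its elements are diagram squares. The essential set $\mathcal{E}(\pi)$ is the set of $(i,j)\in D(\pi)$ with $(i+1,j)\notin D(\pi)$ and $(i,j+1)\notin D(\pi)$ (squares outside the array count as not in $D(\pi)$). The rank of a square $(i,j)$ is $\rho(i,j)=\#\{k<i:\pi_k<j\}$ (number of dots strictly northwest), and $\mathcal{E}_r(\pi)=\{(i,j)\in\mathcal{E}(\pi):\rho(i,j)=r\}$. *)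

From mathcomp Require Import all_boot all_fingroup.
Set Implicit Arguments. Unset Strict Implicit. Unset Printing Implicit Defensive.

(* Conventions: rows/columns and values are 1-based natural numbers, as in the
   paper.  A permutation s : 'S_n acts on 'I_n = {0,..,n-1}; we set
   pi s i := (s (i-1)) + 1 for 1 <= i <= n (and 0 outside that range). *)

Definition pv n (s : 'S_n) (i : nat) : nat :=
  if 0 < i then
    match (insub i.-1 : option 'I_n) with Some k => (s k).+1 | None => 0 end
  else 0.

Definition pinv n (s : 'S_n) (j : nat) : nat := pv (s^-1)%g j.

Definition inD n (s : 'S_n) (i j : nat) : bool :=
  [&& 0 < i <= n, 0 < j <= n, j < pv s i & i < pinv s j].

Definition essential n (s : 'S_n) (i j : nat) : bool :=
  [&& inD s i j, ~~ inD s i.+1 j & ~~ inD s i j.+1].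

Definition rk n (s : 'S_n) (i j : nat) : nat :=
  count (fun k => pv s k < j) (iota 1 i.-1).

From mathcomp Require Import all_boot all_fingroup.
From mathcomp Require Import zify.
Set Implicit Arguments. Unset Strict Implicit. Unset Printing Implicit Defensive.

(* (a): of the j-1 dots in the columns left of j, rk(i,j) lie above row i and
   none lies in row i; the others lie in the n-i rows below i, but not in the
   row of the dot of column j.  Hence j-1 <= rk(i,j) + (n-i-1).
   (b), (c): rank 1 means there is exactly one dot northwest of (i,j).  In (b)
   the two boundary conditions put dots at row i-1 and at column j-1, both
   northwest of (i,j), so they coincide.  In (c) an essential square (i',j')
   northwest of (i,j) puts a dot in row i'+1 at a column <= j' and a dot in
   column j'+1 at a row <= i'; both are northwest of (i,j) and they differ. *)

Lemma count_gt1 (T : eqType) (P : pred T) (l : seq T) a b :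
  uniq l -> a \in l -> b \in l -> a != b -> P a -> P b -> 1 < count P l.
Proof.
move=> l_uniq al bl neq_ab Pa Pb; rewrite -size_filter.
apply: (@uniq_leq_size _ [:: a; b]); first by rewrite /= inE neq_ab.
by move=> x; rewrite !inE mem_filter => /orP[] /eqP ->; rewrite ?Pa ?Pb.
Qed.

Lemma pv_ord n (s : 'S_n) (k : 'I_n) : pv s k.+1 = (s k).+1.
Proof. by rewrite /pv /= valK. Qed.

Lemma pinv_inv n (s : 'S_n) : pinv (s^-1)%g =1 pv s.
Proof. by move=> i; rewrite /pinv invgK. Qed.

Lemma inD_inv n (s : 'S_n) i j : inD (s^-1)%g j i = inD s i j.
Proof.
rewrite /inD pinv_inv -/(pinv s j).
by case: (0 < i <= n); case: (0 < j <= n); rewrite //= andbC.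
Qed.

Lemma pv_range n (s : 'S_n) i : 0 < i <= n -> 0 < pv s i <= n.
Proof.
case/andP=> i_gt0 le_in; have lt_in : i.-1 < n by lia.
by rewrite -(prednK i_gt0) (pv_ord s (Ordinal lt_in)) ltn_ord.
Qed.

Lemma pvK n (s : 'S_n) i : 0 < i <= n -> pinv s (pv s i) = i.
Proof.
case/andP=> i_gt0 le_in; have lt_in : i.-1 < n by lia.
by rewrite -(prednK i_gt0) (pv_ord s (Ordinal lt_in)) /pinv pv_ord permK.
Qed.

Lemma pinv_range n (s : 'S_n) j : 0 < j <= n -> 0 < pinv s j <= n.
Proof. exact: pv_range. Qed.

Lemma pinvK n (s : 'S_n) j : 0 < j <= n -> pv s (pinv s j) = j.
Proof. by move=> j_range; rewrite -pinv_inv pvK. Qed.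

Section Diagram.

Variables (n : nat) (s : 'S_n).

Lemma notD_below i j : inD s i j -> i < n -> ~~ inD s i.+1 j -> pv s i.+1 <= j.
Proof.
case/and4P=> _ j_range _ lt_i_pinvj lt_in.
rewrite /inD lt_in j_range /= negb_and -!leqNgt => /orP[// | le_pinvj].
have <- : pinv s j = i.+1 by lia.
by rewrite pinvK.
Qed.

Lemma notD_above i j k : inD s i j -> 0 < k <= i -> ~~ inD s k j -> pv s k < j.
Proof.
case/and4P=> /andP[_ le_in] j_range _ lt_i_pinvj /andP[k_gt0 le_ki].
have k_range : 0 < k <= n by rewrite k_gt0 (leq_trans le_ki).
rewrite /inD k_range j_range (leq_ltn_trans le_ki lt_i_pinvj) andbT -leqNgt.
rewrite leq_eqVlt => /orP[/eqP eq_pvk_j | //].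
by have := pvK s k_range; rewrite eq_pvk_j; lia.
Qed.

Lemma perm_pv_iota : perm_eq (map (pv s) (iota 1 n)) (iota 1 n).
Proof.
have in_range k : (k \in iota 1 n) = (0 < k <= n) by rewrite mem_iota; lia.
apply: uniq_perm; rewrite ?iota_uniq //.
  rewrite map_inj_in_uniq ?iota_uniq // => a b.
  by rewrite !in_range => a_range b_range eq_ab; rewrite -(pvK s a_range) eq_ab pvK.
move=> x; rewrite in_range; apply/mapP/idP => [[k] | x_range].
  by rewrite in_range => /(pv_range s) + ->.
by exists (pinv s x); rewrite ?in_range ?pinv_range ?pinvK.
Qed.

Lemma count_pv_lt j : j <= n.+1 -> count (fun k => pv s k < j) (iota 1 n) = j.-1.
Proof.
rewrite -(count_map (pv s) (fun v => v < j)) (seq.permP perm_pv_iota).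
case: j => [_ | j le_jn]; first by rewrite (eq_count (a2 := pred0)) ?count_pred0.
by rewrite -size_filter -add1n filter_iota_ltn ?size_iota.
Qed.

Lemma inD_rank_bound i j : inD s i j -> i + j <= n + rk s i j.
Proof.
case/and4P=> /andP[i_gt0 le_in] /andP[j_gt0 le_jn] lt_j_pvi lt_i_pinvj.
have iota_split : iota 1 n = iota 1 i.-1 ++ i :: iota i.+1 (n - i).
  rewrite {1}(_ : n = i.-1 + (1 + (n - i))); last by lia.
  by rewrite iotaD !add1n prednK.
have := count_pv_lt (leqW le_jn).
rewrite iota_split count_cat /= -/(rk s i j) ltnNge (ltnW lt_j_pvi) add0n.
have : count (fun k => pv s k < j) (iota i.+1 (n - i)) < n - i.
  rewrite -[X in _ < X](size_iota i.+1) ltn_neqAle count_size andbT -all_count.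
  apply/allPn; exists (pinv s j); last by rewrite pinvK ?ltnn ?j_gt0.
  by have := pinv_range s (j := j); rewrite mem_iota; lia.
lia.
Qed.

Lemma rank_pos_row i j : 0 < rk s i j -> exists2 k, 0 < k < i & pv s k < j.
Proof. by rewrite -has_count => /hasP[k]; rewrite mem_iota => k_range; exists k => //; lia. Qed.

Lemma rank1_row_uniq i j a b : rk s i j = 1 ->
  0 < a < i -> 0 < b < i -> pv s a < j -> pv s b < j -> a = b.
Proof.
move=> rk1 a_range b_range lt_pva lt_pvb; apply/eqP/negPn/negP => neq_ab.
have in_iota k : 0 < k < i -> k \in iota 1 i.-1 by rewrite mem_iota; lia.
have := count_gt1 (P := fun k => pv s k < j) (iota_uniq 1 i.-1)
  (in_iota a a_range) (in_iota b b_range) neq_ab lt_pva lt_pvb.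
by rewrite -/(rk s i j) rk1.
Qed.

End Diagram.

Lemma notD_right n (s : 'S_n) i j :
  inD s i j -> j < n -> ~~ inD s i j.+1 -> pinv s j.+1 <= i.
Proof. rewrite -!(inD_inv s); exact: notD_below. Qed.

Lemma notD_left n (s : 'S_n) i j l :
  inD s i j -> 0 < l <= j -> ~~ inD s i l -> pinv s l < i.
Proof. rewrite -!(inD_inv s); exact: notD_above. Qed.

Lemma rank1_corner n (s : 'S_n) i j : inD s i j -> rk s i j = 1 ->
  ~~ inD s i.-1 j -> ~~ inD s i j.-1 -> pv s i.-1 = j.-1.
Proof.
move=> Dij rk1 notD_up notD_lft.
have [i_range j_range] : 0 < i <= n /\ 0 < j <= n by case/and4P: Dij.
have [k k_range lt_pvk_j] : exists2 k, 0 < k < i & pv s k < j.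
  by apply: rank_pos_row; rewrite rk1.
have := pv_range s (i := k) => pvk_range.
have lt_pv_j : pv s i.-1 < j by apply: (notD_above Dij) notD_up; lia.
have lt_pinv_i : pinv s j.-1 < i by apply: (notD_left Dij) notD_lft; lia.
have := pinv_range s (j := j.-1) => pinv_range_j1.
have corner : i.-1 = pinv s j.-1.
  by apply: (rank1_row_uniq rk1) => //; rewrite ?pinvK; lia.
by rewrite corner pinvK //; lia.
Qed.

Lemma rank1_essential_no_NW n (s : 'S_n) i j i' j' :
  essential s i j -> rk s i j = 1 -> essential s i' j' -> i' < i -> j' < j -> False.
Proof.
case/and3P=> /and4P[/andP[_ le_in] /andP[_ le_jn] lt_j_pvi lt_i_pinvj] _ _ rk1.
case/and3P=> D' not_below not_right lt_i'i lt_j'j.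
have le_pv_j' : pv s i'.+1 <= j' by apply: (notD_below D') not_below => //; lia.
have le_pinv_i' : pinv s j'.+1 <= i' by apply: (notD_right D') not_right => //; lia.
have neq_i'1_i : i'.+1 != i by apply: contraTneq le_pv_j' => ->; lia.
have neq_j'1_j : j'.+1 != j by apply: contraTneq le_pinv_i' => ->; lia.
have := pinv_range s (j := j'.+1) => pinv_range_j'1.
have := rank1_row_uniq rk1 (a := i'.+1) (b := pinv s j'.+1).
by rewrite pinvK; lia.
Qed.

Theorem lemma2p2 (n : nat) (s : 'S_n) :
  (forall (r i j : nat), essential s i j -> rk s i j = r -> i + j <= n + r) /\
  (forall i j : nat, inD s i j -> rk s i j = 1 ->
     ~~ inD s i.-1 j -> ~~ inD s i j.-1 -> pv s i.-1 = j.-1) /\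
  (forall i j : nat, essential s i j -> rk s i j = 1 ->
     ~ (exists i' j' : nat, [&& essential s i' j', i' < i & j' < j])).
Proof.
split; [|split].
- by move=> r i j /and3P[Dij _ _] <-; apply: inD_rank_bound.
- exact: rank1_corner.
- by move=> i j Eij rk1 [i' [j' /and3P[]]]; apply: rank1_essential_no_NW Eij rk1.
Qed.
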